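(* For every $t_0\in\mathbb{C}^*$ with $|t_0|<3-2\sqrt2$ or $|t_0|>3+2\sqrt2$, the specialized Burau representation $\rho_3^{t_0}:\mathcal{B}_3\to\mathrm{GL}(2,\mathbb{C})$ is faithful.
   Context: $\mathcal{B}_3$ is the braid group on three strands, with generators $\sigma_1,\sigma_2$ and the single relation $\sigma_1\sigma_2\sigma_1=\sigma_2\sigma_1\sigma_2$. For $t_0\in\mathbb{C}^*$, the specialized (reduced) Burau representation $\rho_3^{t_0}$ is the homomorphism defined by $\sigma_1\mapsto\begin{pmatrix}-t_0&1\\0&1\end{pmatrix}$, $\sigma_2\mapsto\begin{pmatrix}1&0\\t_0&-t_0\end{pmatrix}$. *)

From HB Require Import structures.
From mathcomp Require Import all_boot all_order all_algebra.
From mathcomp Require Import complex reals.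
Set Implicit Arguments. Unset Strict Implicit. Unset Printing Implicit Defensive.
Import Order.TTheory GRing.Theory Num.Theory.
Local Open Scope ring_scope.

(* Words in the free group on sigma_1, sigma_2:
   a letter is (g, e) with g = false for sigma_1, g = true for sigma_2,
   and e = true for the generator, e = false for its inverse. *)
Definition letter := (bool * bool)%type.
Definition bword := seq letter.

Definition s1 : letter := (false, true).
Definition s2 : letter := (true, true).
Definition linv (l : letter) : letter := (l.1, ~~ l.2).

(* Equality in B_3 = < s1, s2 | s1 s2 s1 = s2 s1 s2 >: the smallest congruence
   on words (w.r.t. concatenation) containing free cancellation and the
   braid relation. *)
Inductive braid_eq : bword -> bword -> Prop :=
| beq_refl w : braid_eq w w
| beq_sym u v : braid_eq u v -> braid_eq v u
| beq_trans u v w : braid_eq u v -> braid_eq v w -> braid_eq u w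
| beq_cancel u v l : braid_eq (u ++ [:: l; linv l] ++ v) (u ++ v)
| beq_braid u v : braid_eq (u ++ [:: s1; s2; s1] ++ v) (u ++ [:: s2; s1; s2] ++ v).

Section Burau.
Variable R : realType.
Local Notation C := R[i].

Definition burau_s1 (t : C) : 'M[C]_2 :=
  \matrix_(i < 2, j < 2)
    if (i == 0) && (j == 0) then - t
    else if (i == 0) && (j == 1) then 1
    else if (i == 1) && (j == 0) then 0
    else 1.

Definition burau_s2 (t : C) : 'M[C]_2 :=
  \matrix_(i < 2, j < 2)
    if (i == 0) && (j == 0) then 1
    else if (i == 0) && (j == 1) then 0
    else if (i == 1) && (j == 0) then t
    else - t.

Definition burau_letter (t : C) (l : letter) : 'M[C]_2 :=
  let M := if l.1 then burau_s2 t else burau_s1 t in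
  if l.2 then M else invmx M.

Definition burau (t : C) (w : bword) : 'M[C]_2 :=
  foldr (fun l M => burau_letter t l *m M) 1%:M w.

Definition burau_faithful (t : C) : Prop :=
  forall u v : bword, burau t u = burau t v -> braid_eq u v.
End Burau.

From HB Require Import structures.
From mathcomp Require Import all_boot all_order all_algebra.
From mathcomp Require Import complex reals.
From mathcomp Require Import ring lra.
From Stdlib Require Import Setoid Morphisms.
Set Implicit Arguments. Unset Strict Implicit. Unset Printing Implicit Defensive.
Import Order.TTheory GRing.Theory Num.Theory ComplexField.Normc.
Local Open Scope ring_scope.

(* Modulo its centre, generated by the full twist Delta^2 = (s1 s2 s1)^2 = (s1 s2)^3, the
   group B_3 is the free product of the cyclic groups generated by y = s1 s2 s1 (of order 2)
   and x = s1 s2 (of order 3).  Hence, after multiplication by a power of Delta^2, every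
   braid becomes a power of Delta^2 times an alternating product of syllables y and x, x^2.
   For 0 < |t| <= 1/3 the Burau matrices of y and of x, x^2 play ping-pong on two disjoint
   cones of C^2, so no nonempty alternating product is a scalar matrix, while Delta^2 acts
   as the scalar t^3 with |t^3| <> 1: only the trivial braid is sent to the identity.
   The automorphism s1 |-> s2^-1, s2 |-> s1^-1 of B_3 turns rho_t into a conjugate of
   rho_(1/t), which covers |t| >= 3.  Both ranges contain those of the statement, since
   3 - 2 sqrt 2 < 1/3. *)

Lemma braid_eq_ctx p q {u v} : braid_eq u v -> braid_eq (p ++ u ++ q) (p ++ v ++ q).
Proof.
elim=> {u v} [w|u v _ IH|u v w _ IH1 _ IH2|u v l|u v].
- exact: beq_refl.
- exact: beq_sym.
- exact: beq_trans IH1 IH2.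
- by rewrite -!catA !(catA p u); apply: beq_cancel.
- by rewrite -!catA !(catA p u); apply: beq_braid.
Qed.

#[local] Instance braid_eq_Equivalence : Equivalence braid_eq.
Proof. by split; [exact: beq_refl | exact: beq_sym | exact: beq_trans]. Qed.

#[local] Instance cat_braid_eq_Proper :
  Proper (braid_eq ==> braid_eq ==> braid_eq) (@cat letter).
Proof.
move=> u u' uu' v v' vv'; transitivity (u' ++ v); first exact: (braid_eq_ctx [::] v uu').
by have := braid_eq_ctx u' [::] vv'; rewrite !cats0.
Qed.

#[local] Hint Resolve beq_refl : core.

Lemma linvK : involutive linv.
Proof. by case=> a b; rewrite /linv negbK. Qed.

Definition winv (w : bword) : bword := rev (map linv w).

Lemma winvK : involutive winv.
Proof. by move=> w; rewrite /winv map_rev revK -map_comp (eq_map linvK) map_id. Qed.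

Lemma winv_cat u v : winv (u ++ v) = winv v ++ winv u.
Proof. by rewrite /winv map_cat rev_cat. Qed.

Lemma cat_winvr w : braid_eq (w ++ winv w) [::].
Proof.
elim: w => [//|l w IH].
rewrite -[l :: w]cat1s winv_cat catA -(catA [:: l]) IH cats0.
exact: beq_cancel [::] [::] l.
Qed.

Lemma cat_winvl w : braid_eq (winv w ++ w) [::].
Proof. by have := cat_winvr (winv w); rewrite winvK. Qed.

Lemma braid_eq_cancel_l p u v : braid_eq (p ++ u) (p ++ v) -> braid_eq u v.
Proof.
move=> puv; have := braid_eq_ctx (winv p) [::] puv.
by rewrite !cats0 !catA cat_winvl.
Qed.

Lemma braid_eq_winv u v : braid_eq u v -> braid_eq (winv u) (winv v).
Proof.
move=> uv; apply: (@braid_eq_cancel_l u).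
by rewrite cat_winvr uv cat_winvr.
Qed.

Definition lflip (l : letter) : letter := (~~ l.1, ~~ l.2).

Lemma lflipK : involutive lflip.
Proof. by case=> a b; rewrite /lflip !negbK. Qed.

Lemma braid_eq_flip u v : braid_eq u v -> braid_eq (map lflip u) (map lflip v).
Proof.
elim=> {u v} [//|u v _ IH|u v w _ IH1 _ IH2|u v l|u v].
- by symmetry.
- by transitivity (map lflip v).
- by rewrite !map_cat; apply: beq_cancel.
- rewrite !map_cat; apply: braid_eq_ctx.
  exact: braid_eq_winv (beq_sym (beq_braid [::] [::])).
Qed.

Definition central (u : bword) := forall w, braid_eq (u ++ w) (w ++ u).

Lemma central_letters u :
  (forall b, braid_eq (u ++ [:: (b, true)]) ([:: (b, true)] ++ u)) -> central u.
Proof.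
move=> comm_pos.
have comm l : braid_eq (u ++ [:: l]) ([:: l] ++ u).
  case: l => b [//|]; have cancel_b := cat_winvr [:: (b, true)].
  transitivity (winv [:: (b, true)] ++ [:: (b, true)] ++ u ++ [:: (b, false)]).
    by rewrite !catA cat_winvl.
  by rewrite (catA _ u) -comm_pos -catA (catA [:: _]) cancel_b cats0.
elim=> [|l w IH]; first by rewrite cats0.
by rewrite -[l :: w]cat1s catA comm -(catA [:: l] u) IH catA.
Qed.

Lemma central_cat u v : central u -> central v -> central (u ++ v).
Proof. by move=> cu cv w; rewrite -catA cv catA cu catA. Qed.

Definition delta : bword := [:: s1; s2; s1].
Definition full_twist : bword := delta ++ delta.

Lemma delta_cat_letter b :
  braid_eq (delta ++ [:: (b, true)]) ([:: (~~ b, true)] ++ delta).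
Proof.
by case: b; [apply: beq_sym (beq_braid [:: s1] [::]) | apply: beq_braid [::] [:: s1]].
Qed.

Lemma central_full_twist : central full_twist.
Proof.
apply: central_letters => b.
by rewrite -catA delta_cat_letter catA delta_cat_letter negbK catA.
Qed.

Definition wpow (w : bword) n : bword := flatten (nseq n w).

Lemma wpowS w n : wpow w n.+1 = w ++ wpow w n.
Proof. by []. Qed.

Lemma wpowD w m n : wpow w (m + n) = wpow w m ++ wpow w n.
Proof. by rewrite /wpow nseqD flatten_cat. Qed.

Lemma central_wpow {w} n : central w -> central (wpow w n).
Proof.
move=> cw; elim: n => [|n IH] v; first by rewrite cats0.
exact: central_cat.
Qed.

Inductive syllable := SylY | SylX | SylX2.

Definition syl_word (g : syllable) : bword :=
  match g with SylY => delta | SylX => [:: s1; s2] | SylX2 => [:: s1; s2; s1; s2] end.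

Definition syl_flat (s : seq syllable) : bword := flatten (map syl_word s).

Definition is_y (g : syllable) : bool := if g is SylY then true else false.
Definition alt (g h : syllable) : bool := is_y g != is_y h.
Definition alternating (s : seq syllable) : bool := sorted alt s.

Lemma alt_is_y g h : alt g h -> is_y g = ~~ is_y h.
Proof. by rewrite /alt; case: (is_y g); case: (is_y h). Qed.

Lemma alternating_tail {g s} : alternating (g :: s) -> alternating s.
Proof. exact: path_sorted. Qed.

Lemma alternating_same_head {g h s} :
  is_y g = is_y h -> alternating (h :: s) -> alternating (g :: s).
Proof. by case: s => //= k s gh; rewrite /alt gh. Qed.

Lemma syl_flat_cons g s : syl_flat (g :: s) = syl_word g ++ syl_flat s.
Proof. by []. Qed.

Lemma syl_flat_rcons s g : syl_flat (rcons s g) = syl_flat s ++ syl_word g.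
Proof. by rewrite -cats1 /syl_flat map_cat flatten_cat /= cats0. Qed.

Lemma x_cube : braid_eq (syl_word SylX ++ syl_word SylX2) full_twist.
Proof. exact: beq_sym (beq_braid delta [::]). Qed.

Lemma x2_square :
  braid_eq (syl_word SylX2 ++ syl_word SylX2) (full_twist ++ syl_word SylX).
Proof.
rewrite -[syl_word SylX2 ++ _]/(syl_word SylX ++ syl_word SylX ++ syl_word SylX2).
by rewrite x_cube central_full_twist.
Qed.

Lemma syl_cons_normal g {s} : alternating s -> exists c s', alternating s' /\
  braid_eq (syl_word g ++ syl_flat s) (wpow full_twist c ++ syl_flat s').
Proof.
case: s => [|h r] alt_s; first by exists 0%N, [:: g].
have alt_r := alternating_tail alt_s.
case gh: (alt g h).
  by exists 0%N, [:: g, h & r]; rewrite /alternating /= gh.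
have same_h g' : is_y g' = is_y h -> alternating (g' :: r).
  by move=> e; apply: alternating_same_head e alt_s.
move/negbFE/eqP: gh => gh; rewrite syl_flat_cons catA.
case: g gh same_h {alt_s} => []; case: h => // _ same_h.
- by exists 1%N, r.
- by exists 0%N, (SylX2 :: r); split; first exact: same_h.
- by exists 1%N, r; rewrite x_cube.
- exists 1%N, r; split => //.
  by rewrite -[syl_word SylX2 ++ _]/(syl_word SylX ++ syl_word SylX2) x_cube.
- exists 1%N, (SylX :: r); split; first exact: same_h.
  by rewrite x2_square -catA.
Qed.

Lemma letter_normal l : exists g h,
  alt g h /\ braid_eq (full_twist ++ [:: l]) (syl_word g ++ syl_word h).
Proof.
have x_cube_l w : braid_eq (full_twist ++ w) ([:: s1; s2; s1; s2; s1; s2] ++ w).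
  by rewrite -x_cube.
case: l => -[] [].
- by exists SylY, SylX2.
- exists SylX, SylY; split => //; rewrite x_cube_l.
  exact: beq_cancel [:: s1; s2; s1; s2; s1] [::] s2.
- by exists SylX2, SylY; split => //; rewrite x_cube_l.
- exists SylY, SylX; split => //.
  exact: beq_cancel [:: s1; s2; s1; s1; s2] [::] s1.
Qed.

Lemma braid_normal_form w : exists a b s, alternating s /\
  braid_eq (wpow full_twist a ++ w) (wpow full_twist b ++ syl_flat s).
Proof.
elim: w => [|l w [a [b [s [alt_s nf_w]]]]]; first by exists 0%N, 0%N, [::].
have [g [h [gh nf_l]]] := letter_normal l.
have [c [s' [alt_s' nf_h]]] := syl_cons_normal h alt_s.
have [c' [s'' [alt_s'' nf_g]]] := syl_cons_normal g alt_s'.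
exists a.+1, (b + c + c')%N, s''; split => //.
have cD n : central (wpow full_twist n) := central_wpow n central_full_twist.
rewrite wpowS -catA -[l :: w]cat1s (catA (wpow _ a)) cD -catA nf_w catA nf_l.
rewrite -catA (catA (syl_word h)) -cD -catA nf_h (catA (wpow _ b)) -wpowD.
by rewrite catA -cD -catA nf_g catA -wpowD.
Qed.

Lemma mulmx1_invmx {R : comUnitRingType} {n} {A B : 'M[R]_n} :
  A *m B = 1%:M -> invmx A = B.
Proof.
move=> AB; have [Au _] := mulmx1_unit AB.
by rewrite -[invmx A]mulmx1 -AB mulmxA mulVmx ?mul1mx.
Qed.

Lemma mulmx_scalar_comm (F : fieldType) n (A B : 'M[F]_n) (c : F) :
  c != 0 -> A *m B = c%:M -> B *m A = c%:M.
Proof.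
move=> c0 AB; have : A *m (c^-1 *: B) = 1%:M.
  by rewrite -scalemxAr AB scale_scalar_mx mulVf.
move/mulmx1C; rewrite -scalemxAl => /(congr1 ( *:%R c)).
by rewrite scalerA divff // scale1r => ->; rewrite scale_scalar_mx mulr1.
Qed.

Lemma det_mx2 (R : comPzRingType) (A : 'M[R]_2) :
  \det A = A 0 0 * A 1 1 - A 0 1 * A 1 0.
Proof.
rewrite (expand_det_row _ 0) !big_ord_recl big_ord0 /cofactor !det_mx11 !mxE /=.
have -> : lift 0 0 = 1 :> 'I_2 by apply: val_inj.
have -> : lift 1 0 = 0 :> 'I_2 by apply: val_inj.
by rewrite expr0 expr1 mul1r mulN1r addr0 mulrN.
Qed.

Section ComplexNorm.
Variable R : realType.
Local Notation C := R[i].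

Lemma normc_ge0 (x : C) : 0 <= normc x.
Proof. by case: x => a b; apply: sqrtr_ge0. Qed.

Lemma normc_gt0 (x : C) : x != 0 -> 0 < normc x.
Proof.
move=> x0; rewrite lt_def normc_ge0 andbT.
by apply: contra x0 => /eqP/eq0_normc ->.
Qed.

Lemma normcX (x : C) n : normc (x ^+ n) = normc x ^+ n.
Proof.
elim: n => [|n IH]; first by rewrite !expr0 normc1.
by rewrite !exprS normcM IH.
Qed.

Lemma normc_sub_ge (x y : C) : normc x - normc y <= normc (x - y).
Proof. by have := le_normcD (x - y) y; rewrite subrK; lra. Qed.

Lemma normc_sub_le (x y : C) : normc (x - y) <= normc x + normc y.
Proof. by have := le_normcD x (- y); rewrite normcN. Qed.

End ComplexNorm.

Section BurauMatrices.
Variable R : realType.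
Local Notation C := R[i].

Definition act (M : 'M[C]_2) (v : C * C) : C * C :=
  (M 0 0 * v.1 + M 0 1 * v.2, M 1 0 * v.1 + M 1 1 * v.2).

Definition scalev (c : C) (v : C * C) : C * C := (c * v.1, c * v.2).

Lemma sum_ord2 (F : 'I_2 -> C) : \sum_(i < 2) F i = F 0 + F 1.
Proof. by rewrite big_ord_recl big_ord1; congr (_ + F _); apply: val_inj. Qed.

Lemma act_mul A B v : act (A *m B) v = act A (act B v).
Proof. by rewrite /act !mxE !sum_ord2 /=; congr pair; ring. Qed.

Lemma act_scalar c v : act c%:M v = scalev c v.
Proof. by rewrite /act !mxE /=; congr pair; ring. Qed.

Lemma act1 v : act 1%:M v = v.
Proof. by rewrite act_scalar /scalev !mul1r; case: v. Qed.

Lemma act_inj A B : (forall v, act A v = act B v) -> A = B.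
Proof.
move=> AB; move: (AB (1, 0)) (AB (0, 1)).
rewrite /act /= !mulr1 !mulr0 !addr0 !add0r => -[e00 e10] [e01 e11].
have ord2 (k : 'I_2) : k = 0 \/ k = 1.
  by case: k => -[|[|//]] ?; [left | right]; apply: val_inj.
by apply/matrixP => i j; case: (ord2 i) => ->; case: (ord2 j) => ->.
Qed.

Definition swap_mx : 'M[C]_2 := \matrix_(i, j) (i != j)%:R.

Lemma act_swap v : act swap_mx v = (v.2, v.1).
Proof. by rewrite /act !mxE /=; congr pair; ring. Qed.

Lemma swap_mxK : swap_mx *m swap_mx = 1%:M.
Proof. by apply: act_inj => v; rewrite act_mul !act_swap act1; case: v. Qed.

Definition swap_conj (A : 'M[C]_2) : 'M[C]_2 := swap_mx *m A *m swap_mx.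

Lemma swap_conjK : involutive swap_conj.
Proof.
by move=> A; rewrite /swap_conj !mulmxA swap_mxK mul1mx -mulmxA swap_mxK mulmx1.
Qed.

Lemma swap_conj1 : swap_conj 1%:M = 1%:M.
Proof. by rewrite /swap_conj mulmx1 swap_mxK. Qed.

Lemma swap_conjM A B : swap_conj (A *m B) = swap_conj A *m swap_conj B.
Proof.
by rewrite /swap_conj !mulmxA -(mulmxA (swap_mx *m A) swap_mx) swap_mxK mulmx1.
Qed.

Definition burau_gen (t : C) (b : bool) : 'M[C]_2 :=
  if b then burau_s2 t else burau_s1 t.

Lemma burau_letterE t l :
  burau_letter t l = if l.2 then burau_gen t l.1 else invmx (burau_gen t l.1).
Proof. by []. Qed.

Lemma act_s1 t v : act (burau_s1 t) v = (v.2 - t * v.1, v.2).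
Proof. by rewrite /act !mxE /=; congr pair; ring. Qed.

Lemma act_s2 t v : act (burau_s2 t) v = (v.1, t * (v.1 - v.2)).
Proof. by rewrite /act !mxE /=; congr pair; ring. Qed.

Variable t : C.

Lemma burau_cat u v : burau t (u ++ v) = burau t u *m burau t v.
Proof. by elim: u => [|l u IH] /=; rewrite ?mul1mx // IH mulmxA. Qed.

Lemma burau_braid : burau t [:: s1; s2; s1] = burau t [:: s2; s1; s2].
Proof.
apply: act_inj => v; rewrite /= !act_mul act1 !act_s1 !act_s2 /=.
by congr pair; ring.
Qed.

Lemma burau_full_twist : burau t full_twist = (t ^+ 3)%:M.
Proof.
apply: act_inj => v; rewrite act_scalar /= !act_mul act1 !act_s1 !act_s2 /=.
by congr pair; ring.
Qed.

Lemma burau_full_twist_pow n : burau t (wpow full_twist n) = (t ^+ (3 * n))%:M.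
Proof.
elim: n => [|n IH]; first by rewrite muln0 expr0.
by rewrite wpowS burau_cat IH burau_full_twist -scalar_mxM -exprD mulnS.
Qed.

Lemma act_syl_Y v : act (burau t (syl_word SylY)) v = (- (t * v.2), - (t ^+ 2 * v.1)).
Proof. by rewrite /= !act_mul act1 !act_s1 !act_s2 /=; congr pair; ring. Qed.

Lemma act_syl_X v : act (burau t (syl_word SylX)) v = (- (t * v.2), t * (v.1 - v.2)).
Proof. by rewrite /= !act_mul act1 !act_s1 !act_s2 /=; congr pair; ring. Qed.

Lemma act_syl_X2 v :
  act (burau t (syl_word SylX2)) v = (t ^+ 2 * (v.2 - v.1), - (t ^+ 2 * v.1)).
Proof. by rewrite /= !act_mul act1 !act_s1 !act_s2 /=; congr pair; ring. Qed.

Hypothesis t_neq0 : t != 0.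

Lemma burau_gen_unit b : burau_gen t b \in unitmx.
Proof.
rewrite unitmxE det_mx2 unitfE; case: b; rewrite !mxE /=.
  by rewrite mul0r mul1r subr0 oppr_eq0.
by rewrite mulr0 mulr1 subr0 oppr_eq0.
Qed.

Lemma burau_cancel l : burau t [:: l; linv l] = 1%:M.
Proof.
case: l => b [] /=; rewrite !burau_letterE /= mulmx1.
  exact: mulmxV (burau_gen_unit b).
exact: mulVmx (burau_gen_unit b).
Qed.

Lemma burau_braid_eq {u v} : braid_eq u v -> burau t u = burau t v.
Proof.
elim=> {u v} [//|u v _ -> //|u v w _ -> _ -> //|u v l|u v].
  by rewrite !burau_cat burau_cancel mul1mx.
by rewrite !burau_cat burau_braid.
Qed.

Lemma burau_faithful_of_kernel :
  (forall w, burau t w = 1%:M -> braid_eq w [::]) -> burau_faithful t.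
Proof.
move=> kernel u v uv.
have : burau t (u ++ winv v) = 1%:M.
  by rewrite burau_cat uv -burau_cat (burau_braid_eq (cat_winvr v)).
move/kernel => u_v; transitivity (u ++ winv v ++ v); first by rewrite cat_winvl cats0.
by rewrite catA u_v.
Qed.

Lemma swap_conj_burau_gen b :
  swap_conj (burau_gen t b) *m burau_gen t^-1 (~~ b) = 1%:M.
Proof.
apply: act_inj => -[x y]; rewrite /swap_conj !act_mul act1.
by case: b; rewrite ?act_s1 ?act_s2 !act_swap ?act_s1 ?act_s2 /=; congr pair; field.
Qed.

Lemma burau_letter_flip l :
  burau_letter t l = swap_conj (burau_letter t^-1 (lflip l)).
Proof.
case: l => b e; have gen_flip := swap_conj_burau_gen b.
rewrite !burau_letterE /=; case: e => /=.
  by rewrite (mulmx1_invmx (mulmx1C gen_flip)) swap_conjK.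
apply: mulmx1_invmx.
by rewrite -[burau_gen t b]swap_conjK -swap_conjM gen_flip swap_conj1.
Qed.

Lemma burau_flip w : burau t w = swap_conj (burau t^-1 (map lflip w)).
Proof.
elim: w => [|l w IH] /=; first by rewrite swap_conj1.
by rewrite swap_conjM -IH -burau_letter_flip.
Qed.

Lemma burau_faithfulV : burau_faithful t^-1 -> burau_faithful t.
Proof.
move=> faithful u v; rewrite !burau_flip => /(can_inj swap_conjK)/faithful.
by move/braid_eq_flip; rewrite -!map_comp !(eq_map lflipK) !map_id.
Qed.

End BurauMatrices.

Section PingPong.
Variable R : realType.
Local Notation C := R[i].

Record pingpong_cones (t : C) (P : bool -> C * C -> Prop) : Prop := PingpongCones {
  cone_scale : forall b c v, c != 0 -> P b v -> P b (scalev c v);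
  cones_disjoint : forall v, P true v -> P false v -> False;
  cone_nonempty : forall b, exists v, P b v;
  syl_maps_cone : forall g v,
    P (is_y g) v -> P (~~ is_y g) (act (burau t (syl_word g)) v)
}.

Variables (t : C) (P : bool -> C * C -> Prop).
Hypotheses (t_neq0 : t != 0) (cones : pingpong_cones t P).

Lemma cones_disjointb b v : P b v -> P (~~ b) v -> False.
Proof.
case: b => Pv Pv'; first exact: (cones_disjoint cones) Pv Pv'.
exact: (cones_disjoint cones) Pv' Pv.
Qed.

Lemma alternating_maps_cone g r v : path alt g r ->
  P (is_y (last g r)) v -> P (~~ is_y g) (act (burau t (syl_flat (g :: r))) v).
Proof.
elim: r g => [|h r IH] g; rewrite syl_flat_cons burau_cat act_mul /=.
  by move=> _ Pv; rewrite act1; apply: (syl_maps_cone cones).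
case/andP=> /alt_is_y gh ghr Pv.
by apply: (syl_maps_cone cones); rewrite gh; apply: IH.
Qed.

Lemma x_square_maps_cone l u : ~~ is_y l -> P false u ->
  P true (act (burau t (syl_word l ++ syl_word l)) u).
Proof.
case: l => [yY|_|_] Pu //; first exact: (syl_maps_cone cones (g := SylX2) Pu).
rewrite (burau_braid_eq t_neq0 x2_square) burau_cat burau_full_twist act_mul act_scalar.
apply: (cone_scale cones); first by rewrite expf_neq0.
exact: (syl_maps_cone cones (g := SylX)).
Qed.

(* Test the word on l u, which lies in P true: it acts there as (g .. r) l^2 on u, and l^2
   maps P false into P true, so the result lies in P false; a scalar would keep it in P true. *)
Lemma mixed_not_scalar g r l c : is_y g -> ~~ is_y l -> path alt g (rcons r l) ->
  c != 0 -> burau t (syl_flat (g :: rcons r l)) = c%:M -> False.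
Proof.
move=> yg xl; rewrite rcons_path => /andP[gr /alt_is_y].
rewrite (negPf xl) => /= ylast c0; rewrite -rcons_cons syl_flat_rcons burau_cat => W.
have [u Pu] := cone_nonempty cones false.
set v := act (burau t (syl_word l)) u.
have Pv : P true v.
  by have := syl_maps_cone cones (g := l) (v := u); rewrite (negPf xl); apply.
have Pllv : P (is_y (last g r)) (act (burau t (syl_word l)) v).
  by rewrite ylast; have := x_square_maps_cone xl Pu; rewrite burau_cat act_mul.
have := alternating_maps_cone gr Pllv; rewrite yg -act_mul W act_scalar.
by apply: (cones_disjoint cones); apply: (cone_scale cones).
Qed.

Lemma alternating_scalar_nil s c : alternating s -> c != 0 ->
  burau t (syl_flat s) = c%:M -> s = [::].
Proof.
case: s => [//|g r] alt_s c0 W; exfalso.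
have [same|mixed] := boolP (is_y g == is_y (last g r)).
  have [v Pv] := cone_nonempty cones (is_y (last g r)).
  have := alternating_maps_cone alt_s Pv; rewrite (eqP same) W act_scalar.
  by apply: cones_disjointb; apply: (cone_scale cones).
have [yg|xg] := boolP (is_y g).
  case/lastP: r alt_s mixed W => [|r l]; first by rewrite eqxx.
  by rewrite last_rcons yg /= => alt_s xl; apply: mixed_not_scalar yg xl alt_s c0.
case: r alt_s mixed W => [|h r]; first by rewrite eqxx.
case/andP=> /alt_is_y; rewrite (negbTE xg) => /esym/negbFE yh alt_r.
rewrite /= negbK => ylast; rewrite syl_flat_cons burau_cat => /(mulmx_scalar_comm c0).
rewrite -burau_cat -syl_flat_rcons; apply: (mixed_not_scalar yh xg _ c0).
by rewrite rcons_path /alt ylast (negbTE xg) andbT.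
Qed.

Hypothesis normc_t_neq1 : normc t != 1.

Lemma burau_kernel_trivial w : burau t w = 1%:M -> braid_eq w [::].
Proof.
move=> w1; have [a [b [s [alt_s nf_w]]]] := braid_normal_form w.
move: (burau_braid_eq t_neq0 nf_w).
rewrite !burau_cat w1 mulmx1 !burau_full_twist_pow => tab.
have tb0 : t ^+ (3 * b) != 0 by rewrite expf_neq0.
have W : burau t (syl_flat s) = ((t ^+ (3 * b))^-1 * t ^+ (3 * a))%:M.
  by rewrite -scale_scalar_mx tab mul_scalar_mx scalerA mulVf ?scale1r.
have s0 : s = [::].
  by apply: alternating_scalar_nil alt_s _ W; rewrite mulf_neq0 ?invr_eq0 ?expf_neq0.
move: tab nf_w; rewrite s0 /= mulmx1 => /matrixP/(_ 0 0); rewrite !mxE eqxx !mulr1n.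
move/(congr1 (@normc R)); rewrite !normcX => /(ieexprIn (normc_gt0 t_neq0) normc_t_neq1)/eqP.
by rewrite eqn_pmul2l // => /eqP <-; apply: braid_eq_cancel_l.
Qed.

End PingPong.

Section SmallCones.
Variable R : realType.
Local Notation C := R[i].

Variable t : C.
Hypotheses (t_neq0 : t != 0) (t_small : 3 * normc t <= 1).

Definition small_cone (b : bool) (v : C * C) : Prop :=
  if b then v.2 != 0 /\ 2 * normc v.1 <= 3 * normc v.2
  else v.1 != 0 /\ 2 * normc v.2 <= normc v.1.

Lemma small_pingpong_cones : pingpong_cones t small_cone.
Proof.
have nt := normc_ge0 t.
split.
- move=> [] c v c0 [v0 le_v] /=; rewrite !normcM;
    (split; first by rewrite mulf_neq0); have := normc_ge0 c; nra.
- move=> v [v2 le_1] [_ le_2]; have := normc_gt0 v2; lra.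
- case; [exists (0, 1) | exists (1, 0)]; split; try exact: oner_neq0;
    rewrite normc0 normc1; lra.
- case=> v [v0 le_v]; have n1 := normc_ge0 v.1; have n2 := normc_ge0 v.2.
  + rewrite act_syl_Y; split; first by rewrite /= oppr_eq0 mulf_neq0 ?expf_neq0.
    have : 0 <= normc t * normc v.2 * (1 - 3 * normc t) by rewrite !mulr_ge0 // subr_ge0.
    rewrite /= !normcN !normcM; nra.
  + have le_d := normc_sub_ge v.1 v.2; have v1_pos := normc_gt0 v0.
    rewrite act_syl_X; split.
      rewrite /= mulf_neq0 //; apply: contraTneq le_d => ->.
      rewrite normc0; lra.
    rewrite /= !normcN !normcM; nra.
  + have le_s := normc_sub_le v.2 v.1; have v1_pos := normc_gt0 v0.
    rewrite act_syl_X2; split; first by rewrite /= oppr_eq0 mulf_neq0 ?expf_neq0.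
    rewrite /= !normcN !normcM; nra.
Qed.

End SmallCones.

Lemma burau_faithful_small (R : realType) (t : R[i]) :
  t != 0 -> 3 * normc t <= 1 -> burau_faithful t.
Proof.
move=> t_neq0 t_small; apply: (burau_faithful_of_kernel t_neq0).
apply: (burau_kernel_trivial t_neq0 (small_pingpong_cones t_neq0 t_small)).
by apply: contraTneq t_small => ->; lra.
Qed.

Lemma three_sub_two_sqrt2_le (R : realType) : 3 * (3 - 2 * Num.sqrt 2) <= 1 :> R.
Proof.
have s0 : 0 <= Num.sqrt (2 : R) := sqrtr_ge0 2.
have s2 : Num.sqrt (2 : R) ^+ 2 = 2 by rewrite sqr_sqrtr.
nra.
Qed.

Theorem theorem2 (R : realType) (t0 : R[i]) :
  t0 != 0 ->
  (ComplexField.Normc.normc t0 < 3 - 2 * Num.sqrt 2 \/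
   3 + 2 * Num.sqrt 2 < ComplexField.Normc.normc t0) ->
  burau_faithful t0.
Proof.
move=> t0_neq0 t0_range.
have s0 := sqrtr_ge0 (2 : R); have s_bound := three_sub_two_sqrt2_le R.
case: t0_range => [t0_small | t0_large].
  by apply: (burau_faithful_small t0_neq0); lra.
have t0_pos : 0 < normc t0 by lra.
apply: (burau_faithfulV t0_neq0); apply: burau_faithful_small.
  by rewrite invr_eq0.
by rewrite normcV ler_pdivrMr //; lra.
Qed.
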